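(* Let $A$ be a general event structure and let $\mathit{er}(A)=(P,\le_P,\mathrm{Con}_P,\equiv_P)$ be as defined in the context. Then the set of configurations of $(P,\le_P,\mathrm{Con}_P)$, ordered by inclusion, is order-isomorphic to the order of extremal realisations of $\mathcal{C}^\infty(A)$. Explicitly: an extremal realisation $\rho$ corresponds (up to isomorphism of realisations) to the configuration $\{p\in P \mid p\preceq\rho\}$ of $P$; conversely a configuration $x$ of $P$ corresponds to the extremal realisation with carrier $(x,\le_P\restriction x)$ and function $\max_A : x\to A$.
   Context: A general event structure is $(E,\mathrm{Con},\vdash)$ where $E$ is a set, $\mathrm{Con}$ is a nonempty family of finite subsets of $E$ closed under subsets, and $\vdash\subseteq \mathrm{Con}\times E$ satisfies: $Y\in\mathrm{Con}$, $X\subseteq Y$, $X\vdash e$ imply $Y\vdash e$. A configuration is a subset $x\subseteq E$ which is consistent (every finite subset lies in $\mathrm{Con}$) and secured (for every $e\in x$ there are $e_1,\dots,e_n\in x$ with $e_n=e$ and $\{e_1,\dots,e_{i-1}\}\vdash e_i$ for all $i\le n$). $\mathcal{C}^\infty(A)$ denotes the set of configurations of $A$. Causal realisations: Let $\mathcal A$ be a family of sets with underlying set $A=\bigcup\mathcal A$. A (causal) realisation of $\mathcal A$ is a partial order $(E,\le)$ (its carrier) in which $\{e'\mid e'\le e\}$ is finite for all $e$, with a function $\rho:E\to A$ such that $\rho x\in\mathcal A$ for every down-closed $x\subseteq E$. A map of realisations from $(E,\le),\rho$ to $(E',\le'),\rho'$ is a partial surjective function $f:E\rightharpoonup E'$ sending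 down-closed subsets to down-closed subsets with $\rho(e)=\rho'(f(e))$ whenever $f(e)$ is defined; write $\rho\succeq\rho'$ (equivalently $\rho'\preceq\rho$) if such a map exists. A map is total if $f$ is a total function. A realisation $\rho$ is extremal if every total map of realisations out of $\rho$ is an isomorphism of realisations. The order of extremal realisations has as elements isomorphism classes of extremal realisations, ordered by $\preceq$ between representatives. A realisation has a top element if its carrier has an element above all others. $\mathit{er}(A)$: $P$ consists of one chosen representative from each isomorphism class of extremal realisations of $\mathcal{C}^\infty(A)$ having a top element; for $p\in P$, $\max_A(p)\in A$ is the image under the realisation's function of its top element. $p\le_P p'$ iff $p\preceq p'$. A finite $X\subseteq P$ is in $\mathrm{Con}_P$ iff $\max_A[X]\in\mathcal{C}^\infty(A)$, where $[X]$ is the $\le_P$-down-closure of $X$. $p_1\equiv_P p_2$ iff $\max_A(p_1)=\max_A(p_2)$. A configuration of $(P,\le_P,\mathrm{Con}_P)$ is a down-closed subset all of whose finite subsets are in $\mathrm{Con}_P$. *)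

From Stdlib Require Import List.
Import ListNotations.
Set Implicit Arguments.

Definition subset {T : Type} (X Y : T -> Prop) : Prop := forall a, X a -> Y a.
Definition finite {T : Type} (X : T -> Prop) : Prop :=
  exists l : list T, forall a, X a -> In a l.
Definition image {T U : Type} (f : T -> U) (X : T -> Prop) : U -> Prop :=
  fun b => exists a, X a /\ f a = b.

Record GES := {
  ev : Type;
  Con : (ev -> Prop) -> Prop;
  ent : (ev -> Prop) -> ev -> Prop;
  Con_fin : forall X, Con X -> finite X;
  Con_ne : exists X, Con X;
  Con_sub : forall X Y, Con Y -> subset X Y -> Con X;
  ent_Con : forall X e, ent X e -> Con X;
  ent_mono : forall X Y e, Con Y -> subset X Y -> ent X e -> ent Y e
}.

(* securing (e_n :: ... :: e_1 :: nil) : each e_i is enabled by {e_1..e_{i-1}} *)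
Fixpoint securing (A : GES) (l : list (ev A)) : Prop :=
  match l with
  | [] => True
  | e :: l' => securing A l' /\ ent A (fun a => In a l') e
  end.

Definition consistent (A : GES) (x : ev A -> Prop) : Prop :=
  forall X, finite X -> subset X x -> Con A X.
Definition secured (A : GES) (x : ev A -> Prop) : Prop :=
  forall e, x e -> exists l, securing A (e :: l) /\ forall a, In a l -> x a.
Definition config (A : GES) (x : ev A -> Prop) : Prop :=
  consistent A x /\ secured A x.

Definition down_closed {E : Type} (le : E -> E -> Prop) (x : E -> Prop) : Prop :=
  forall e e', x e -> le e' e -> x e'.

Definition is_real (A : GES) {E : Type} (le : E -> E -> Prop) (lab : E -> ev A) : Prop :=
  (forall e, le e e) /\
  (forall e e', le e e' -> le e' e -> e = e') /\
  (forall e1 e2 e3, le e1 e2 -> le e2 e3 -> le e1 e3) /\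
  (forall e, finite (fun e' => le e' e)) /\
  (forall x, down_closed le x -> config A (image lab x)).

Record realisation (A : GES) := {
  carrier : Type;
  rle : carrier -> carrier -> Prop;
  rlab : carrier -> ev A;
  rreal : is_real A rle rlab
}.

Definition is_map (A : GES) {E E' : Type} (le : E -> E -> Prop) (lab : E -> ev A)
  (le' : E' -> E' -> Prop) (lab' : E' -> ev A) (f : E -> option E') : Prop :=
  (forall e', exists e, f e = Some e') /\
  (forall x, down_closed le x -> down_closed le' (fun e' => exists e, x e /\ f e = Some e')) /\
  (forall e e', f e = Some e' -> lab e = lab' e').

(* rho >= rho' : there is a map from rho to rho' *)
Definition real_succ (A : GES) {E E' : Type} (le : E -> E -> Prop) (lab : E -> ev A)
  (le' : E' -> E' -> Prop) (lab' : E' -> ev A) : Prop :=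
  exists f, is_map A le lab le' lab' f.

Definition real_preceq (A : GES) {E E' : Type} (le : E -> E -> Prop) (lab : E -> ev A)
  (le' : E' -> E' -> Prop) (lab' : E' -> ev A) : Prop :=
  real_succ A le' lab' le lab.

Definition iso_map (A : GES) {E E' : Type} (le : E -> E -> Prop) (lab : E -> ev A)
  (le' : E' -> E' -> Prop) (lab' : E' -> ev A) (f : E -> E') : Prop :=
  is_map A le lab le' lab' (fun e => Some (f e)) /\
  exists g : E' -> E,
    (forall e, g (f e) = e) /\ (forall e', f (g e') = e') /\
    is_map A le' lab' le lab (fun e' => Some (g e')).

Definition real_iso (A : GES) {E E' : Type} (le : E -> E -> Prop) (lab : E -> ev A)
  (le' : E' -> E' -> Prop) (lab' : E' -> ev A) : Prop :=
  exists f, iso_map A le lab le' lab' f.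

Definition extremal (A : GES) {E : Type} (le : E -> E -> Prop) (lab : E -> ev A) : Prop :=
  forall (E' : Type) (le' : E' -> E' -> Prop) (lab' : E' -> ev A),
    is_real A le' lab' ->
    forall f : E -> E', is_map A le lab le' lab' (fun e => Some (f e)) ->
      iso_map A le lab le' lab' f.

Definition has_top {E : Type} (le : E -> E -> Prop) : Prop :=
  exists t, forall e, le e t.

(* R i is the chosen representative p, top i its top element *)
Definition leP (A : GES) {I : Type} (R : I -> realisation A) (p q : I) : Prop :=
  real_preceq A (@rle A (R p)) (@rlab A (R p)) (@rle A (R q)) (@rlab A (R q)).

Definition maxA (A : GES) {I : Type} (R : I -> realisation A)
  (top : forall i, carrier (R i)) (p : I) : ev A :=
  rlab (R p) (top p).

Definition downP (A : GES) {I : Type} (R : I -> realisation A) (X : I -> Prop) : I -> Prop :=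
  fun p => exists q, X q /\ leP R p q.

Definition ConP (A : GES) {I : Type} (R : I -> realisation A)
  (top : forall i, carrier (R i)) (X : I -> Prop) : Prop :=
  finite X /\ config A (image (maxA R top) (downP R X)).

Definition configP (A : GES) {I : Type} (R : I -> realisation A)
  (top : forall i, carrier (R i)) (x : I -> Prop) : Prop :=
  down_closed (leP R) x /\
  (forall X, finite X -> subset X x -> ConP R top X).

Definition Psi (A : GES) {I : Type} (R : I -> realisation A)
  {E : Type} (le : E -> E -> Prop) (lab : E -> ev A) : I -> Prop :=
  fun p => real_preceq A (@rle A (R p)) (@rlab A (R p)) le lab.

Definition PhiLe (A : GES) {I : Type} (R : I -> realisation A) (x : I -> Prop)
  : {p : I | x p} -> {p : I | x p} -> Prop :=
  fun a b => leP R (proj1_sig a) (proj1_sig b).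

Definition PhiLab (A : GES) {I : Type} (R : I -> realisation A)
  (top : forall i, carrier (R i)) (x : I -> Prop) : {p : I | x p} -> ev A :=
  fun a => maxA R top (proj1_sig a).

(** For an event [e] of an extremal realisation [rho], the down-set of [e] is again an
    extremal realisation, with top [e], so it is isomorphic to a unique representative
    [down_rep e] in [P]; the [p] below [rho] are exactly these, and [e |-> down_rep e] is
    an isomorphism from [rho] onto [(Psi rho, <=_P)].  Conversely, for a configuration
    [x] of [P] the down-set of each [p] in [(x, <=_P)] is isomorphic to [p] itself; this
    gives extremality of [(x, <=_P)] and [Psi (x, <=_P) = x].

    The tool behind both directions: if [f] is a map out of an extremal realisation
    [rho], gluing its target to the part of [rho] outside the domain of [f] gives a
    realisation receiving a total map from [rho], which must be an isomorphism; hence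
    [f] is injective on its domain and preimages under [f] of down-closed sets are
    down-closed. *)

From Stdlib Require Import List Classical ClassicalEpsilon ProofIrrelevance
  FunctionalExtensionality PropExtensionality.
From Stdlib Require FinFun.
Import ListNotations.

Lemma proj1_sig_inj {T : Type} (P : T -> Prop) (a b : sig P) :
  proj1_sig a = proj1_sig b -> a = b.
Proof. apply eq_sig_hprop; intros; apply proof_irrelevance. Qed.

Lemma finite_image_lift {T U : Type} (f : T -> U) (Y : T -> Prop) (F : U -> Prop) :
  finite F -> subset F (image f Y) ->
  exists X, finite X /\ subset X Y /\ subset F (image f X).
Proof.
  intros [lF HlF] HFY.
  assert (Hlift : forall l, (forall a, In a l -> F a -> image f Y a) ->
    exists lp, (forall p, In p lp -> Y p) /\
               (forall a, In a l -> F a -> exists p, In p lp /\ f p = a)).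
  { induction l as [|a l IH]; intros Hl.
    - exists []; simpl; tauto.
    - destruct IH as [lp [Hlp HlpF]]; [intros b Hb; apply Hl; now right|].
      destruct (classic (F a)) as [Fa|nFa].
      + destruct (Hl a (or_introl eq_refl) Fa) as [p [Hp Hpa]].
        exists (p :: lp); split; [intros q [<-|Hq]; auto|].
        intros b [<-|Hb] Fb; [exists p; simpl; auto|].
        destruct (HlpF b Hb Fb) as [q [Hq Hqb]]; exists q; simpl; auto.
      + exists lp; split; auto.
        intros b [<-|Hb] Fb; [contradiction|auto]. }
  destruct (Hlift lF (fun a _ Fa => HFY a Fa)) as [lp [Hlp HlpF]].
  exists (fun p => In p lp); split; [now exists lp|split; [exact Hlp|]].
  intros a Fa. destruct (HlpF a (HlF a Fa) Fa) as [p Hp]. now exists p.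
Qed.

Definition below {E : Type} (le : E -> E -> Prop) (e : E) : E -> Prop :=
  fun s => le s e.

Definition pcomp {E1 E2 E3 : Type} (f : E1 -> option E2) (g : E2 -> option E3)
  (e : E1) : option E3 :=
  match f e with Some e2 => g e2 | None => None end.

Definition sub_le {E : Type} (le : E -> E -> Prop) (C : E -> Prop) :
  sig C -> sig C -> Prop :=
  fun a b => le (proj1_sig a) (proj1_sig b).

Definition sub_lab {A : GES} {E : Type} (lab : E -> ev A) (C : E -> Prop) :
  sig C -> ev A :=
  fun a => lab (proj1_sig a).

Definition restr {E : Type} (C : E -> Prop) (e : E) : option (sig C) :=
  match excluded_middle_informative (C e) with
  | left h => Some (exist C e h)
  | right _ => None
  end.

Lemma restr_in {E : Type} (C : E -> Prop) (b : sig C) : restr C (proj1_sig b) = Some b.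
Proof.
  unfold restr. destruct (excluded_middle_informative (C (proj1_sig b))) as [h|n].
  - f_equal; now apply proj1_sig_inj.
  - destruct b; contradiction.
Qed.

Lemma restr_some {E : Type} (C : E -> Prop) e b : restr C e = Some b -> proj1_sig b = e.
Proof.
  unfold restr. destruct (excluded_middle_informative (C e)); intros H; [|discriminate].
  now injection H as <-.
Qed.

Lemma finite_sig {E : Type} (C P : E -> Prop) :
  finite P -> finite (fun b : sig C => P (proj1_sig b)).
Proof.
  intros [l Hl].
  exists (flat_map (fun a => match restr C a with Some b => [b] | None => [] end) l).
  intros b Hb. apply in_flat_map. exists (proj1_sig b); split; [now apply Hl|].
  rewrite restr_in. now left.
Qed.

Section Realisations.
Variable A : GES.

Lemma config_equiv (X Y : ev A -> Prop) :
  (forall a, X a <-> Y a) -> config A X -> config A Y.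
Proof.
  intros H [Hc Hs]; split.
  - intros F HF HFY. apply Hc; auto. intros a Ha; apply H; auto.
  - intros e He. destruct (Hs e) as [l [Hl1 Hl2]]; [now apply H|].
    exists l; split; auto. intros a Ha; apply H; auto.
Qed.

Lemma config_sub_consistent (X Y : ev A -> Prop) :
  subset X Y -> config A Y -> consistent A X.
Proof. intros H [Hc _] F HF HFX. apply Hc; auto. intros a Ha; auto. Qed.

Section Basics.
Variables (E : Type) (le : E -> E -> Prop) (lab : E -> ev A).
Hypothesis Hr : is_real A le lab.

Lemma real_refl e : le e e. Proof. apply Hr. Qed.
Lemma real_antisym e e' : le e e' -> le e' e -> e = e'. Proof. apply Hr. Qed.
Lemma real_trans e1 e2 e3 : le e1 e2 -> le e2 e3 -> le e1 e3. Proof. apply Hr. Qed.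
Lemma real_below_finite e : finite (below le e). Proof. apply Hr. Qed.
Lemma real_config x : down_closed le x -> config A (image lab x). Proof. apply Hr. Qed.

Lemma below_down_closed e : down_closed le (below le e).
Proof. intros a b Ha Hb. eapply real_trans; eauto. Qed.

Lemma real_config_all : config A (image lab (fun _ => True)).
Proof. apply real_config. intros a b _ _; auto. Qed.

Lemma real_top_unique t t' : (forall e, le e t) -> (forall e, le e t') -> t = t'.
Proof. intros H1 H2; apply real_antisym; auto. Qed.

Lemma sub_real (C : E -> Prop) :
  down_closed le C -> is_real A (sub_le le C) (sub_lab lab C).
Proof.
  intros HC. unfold sub_le, sub_lab. split; [|split; [|split; [|split]]].
  - intros e; apply real_refl.
  - intros a b H1 H2. apply proj1_sig_inj, real_antisym; auto.
  - intros a b c; apply real_trans.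
  - intros e. apply (finite_sig C (below le (proj1_sig e))), real_below_finite.
  - intros x Hx.
    apply config_equiv with (image lab (fun s => exists h, x (exist C s h))).
    + intros a; split.
      * intros [s [[h Hs] Hl]]. now exists (exist C s h).
      * intros [[s h] [Hs Hl]]. exists s; split; eauto.
    + apply real_config. intros s s' [h Hs] Hle.
      exists (HC _ _ h Hle). exact (Hx (exist C s h) (exist C s' _) Hs Hle).
Qed.

Lemma below_real e : is_real A (sub_le le (below le e)) (sub_lab lab (below le e)).
Proof. apply sub_real, below_down_closed. Qed.

Definition below_top e : sig (below le e) := exist _ e (real_refl e).

Lemma below_top_top e b : sub_le le (below le e) b (below_top e).
Proof. exact (proj2_sig b). Qed.

Lemma injective_endo_below_top (t : E) (Ht : forall s, le s t) (g : E -> E) e :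
  (forall a b, g a = g b -> a = b) -> (forall s, le (g s) e) -> e = t.
Proof.
  intros Hinj Hg.
  assert (Hfin : FinFun.Finite E).
  { destruct (real_below_finite t) as [l Hl]. exists l. intros s; apply Hl, Ht. }
  assert (Hdec : forall a b : E, a = b \/ a <> b) by (intros; apply classic).
  destruct (proj1 (FinFun.Endo_Injective_Surjective Hfin Hdec g) Hinj t) as [s Hs].
  apply real_antisym; [apply Ht|]. rewrite <- Hs; apply Hg.
Qed.

End Basics.

Arguments real_refl {E le lab} Hr e.
Arguments real_antisym {E le lab} Hr e e'.
Arguments real_trans {E le lab} Hr e1 e2 e3.
Arguments real_below_finite {E le lab} Hr e.
Arguments real_config {E le lab} Hr x.
Arguments below_down_closed {E le lab} Hr e.
Arguments real_config_all {E le lab} Hr.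
Arguments real_top_unique {E le lab} Hr t t'.
Arguments sub_real {E le lab} Hr C.
Arguments below_real {E le lab} Hr e.
Arguments below_top {E le lab} Hr e.
Arguments below_top_top {E le lab} Hr e b.

Section Map.
Variables (E E' : Type) (le : E -> E -> Prop) (lab : E -> ev A)
  (le' : E' -> E' -> Prop) (lab' : E' -> ev A) (f : E -> option E').
Hypothesis Hf : is_map A le lab le' lab' f.

Lemma map_surj e' : exists e, f e = Some e'. Proof. apply Hf. Qed.
Lemma map_down x : down_closed le x ->
  down_closed le' (fun e' => exists e, x e /\ f e = Some e').
Proof. apply Hf. Qed.
Lemma map_lab e e' : f e = Some e' -> lab e = lab' e'. Proof. apply Hf. Qed.

End Map.

Arguments map_surj {E E' le lab le' lab' f} Hf e'.
Arguments map_down {E E' le lab le' lab' f} Hf x.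
Arguments map_lab {E E' le lab le' lab' f} Hf e e'.

Lemma map_comp {E1 E2 E3 : Type} le1 lab1 le2 lab2 le3 lab3
  (f : E1 -> option E2) (g : E2 -> option E3) :
  is_map A le1 lab1 le2 lab2 f -> is_map A le2 lab2 le3 lab3 g ->
  is_map A le1 lab1 le3 lab3 (pcomp f g).
Proof.
  unfold pcomp. intros Hf Hg; split; [|split].
  - intros e3. destruct (map_surj Hg e3) as [e2 H2].
    destruct (map_surj Hf e2) as [e1 H1]. exists e1; now rewrite H1.
  - intros x Hx e3 e3' [e1 [Hx1 H1]] Hle.
    destruct (f e1) as [e2|] eqn:Hfe; [|discriminate].
    destruct (map_down Hg _ (map_down Hf x Hx) e3 e3') as [e2' [[e1' [Hx' H1']] H2']].
    + exists e2; split; auto. now exists e1.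
    + exact Hle.
    + exists e1'; split; auto. now rewrite H1'.
  - intros e e3 H. destruct (f e) as [e2|] eqn:Hfe; [|discriminate].
    rewrite (map_lab Hf _ _ Hfe). eapply map_lab; eauto.
Qed.

Lemma map_id {E : Type} (le : E -> E -> Prop) (lab : E -> ev A) :
  is_map A le lab le lab (fun e => Some e).
Proof.
  split; [|split].
  - intros e; now exists e.
  - intros x Hx e e' [a [Ha Hea]] Hle. injection Hea as ->.
    exists e'; split; eauto.
  - intros e e' H; now injection H as ->.
Qed.

Lemma real_preceq_refl {E : Type} (le : E -> E -> Prop) (lab : E -> ev A) :
  real_preceq A le lab le lab.
Proof. exists (fun e => Some e). apply map_id. Qed.

Lemma real_preceq_trans {E1 E2 E3 : Type} le1 lab1 le2 lab2 le3 lab3 :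
  @real_preceq A E1 E2 le1 lab1 le2 lab2 -> @real_preceq A E2 E3 le2 lab2 le3 lab3 ->
  real_preceq A le1 lab1 le3 lab3.
Proof. intros [f Hf] [g Hg]. exists (pcomp g f). eapply map_comp; eauto. Qed.

Lemma restr_map {E : Type} (le : E -> E -> Prop) (lab : E -> ev A) (C : E -> Prop) :
  down_closed le C -> is_map A le lab (sub_le le C) (sub_lab lab C) (restr C).
Proof.
  intros HC. split; [|split].
  - intros b. exists (proj1_sig b). apply restr_in.
  - intros x Hx b b' [e [He Hb]] Hle. exists (proj1_sig b'). split; [|apply restr_in].
    apply restr_some in Hb. subst e. eapply Hx; eauto.
  - intros e b H. apply restr_some in H. now subst e.
Qed.

Lemma map_restrict_dom {E E' : Type} le lab le' lab' (f : E -> option E') (C : E -> Prop) :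
  is_map A le lab le' lab' f -> down_closed le C ->
  (forall y, exists e, C e /\ f e = Some y) ->
  is_map A (sub_le le C) (sub_lab lab C) le' lab' (fun b => f (proj1_sig b)).
Proof.
  intros Hf HC Hs. split; [|split].
  - intros y. destruct (Hs y) as [e [h He]]. now exists (exist C e h).
  - intros x Hx y y' [b [Hb Hby]] Hle.
    destruct (map_down Hf (fun s => exists h, x (exist C s h))) with y y'
      as [s [[h Hs'] Hsy]]; auto.
    + intros s s' [h Hs1] Hle'. exists (HC _ _ h Hle'). exact (Hx (exist C s h) (exist C s' _) Hs1 Hle').
    + exists (proj1_sig b). split; auto. exists (proj2_sig b). now destruct b.
    + now exists (exist C s h).
  - intros b y H. exact (map_lab Hf _ _ H).
Qed.

Lemma sub_restr_map {E : Type} (le : E -> E -> Prop) (lab : E -> ev A) (C C' : E -> Prop) :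
  down_closed le C -> subset C C' ->
  is_map A (sub_le le C') (sub_lab lab C') (sub_le le C) (sub_lab lab C)
    (fun b => restr C (proj1_sig b)).
Proof.
  intros HC HCC'. split; [|split].
  - intros c. exists (exist C' (proj1_sig c) (HCC' _ (proj2_sig c))). exact (restr_in C c).
  - intros D HD c c' [d [Hd Hdc]] Hle. apply restr_some in Hdc.
    exists (exist C' (proj1_sig c') (HCC' _ (proj2_sig c'))). split; [|exact (restr_in C c')].
    eapply HD; [exact Hd|]. unfold sub_le in *; simpl. now rewrite <- Hdc.
  - intros c d H. apply restr_some in H. unfold sub_lab. now rewrite H.
Qed.

Definition image_corestr {E E' : Type} (g : E -> E') (D : E -> Prop) (a : sig D) :
  sig (image g D) :=
  exist _ (g (proj1_sig a)) (ex_intro _ (proj1_sig a) (conj (proj2_sig a) eq_refl)).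

Lemma image_down_closed {E E' : Type} le lab le' lab' (g : E -> E') (D : E -> Prop) :
  is_map A le lab le' lab' (fun e => Some (g e)) -> down_closed le D ->
  down_closed le' (image g D).
Proof.
  intros Hg HD y y' Hy Hle.
  destruct (map_down Hg D HD y y') as [a [Ha Hay]].
  - destruct Hy as [a [Ha <-]]. now exists a.
  - exact Hle.
  - injection Hay as <-. now exists a.
Qed.

Lemma image_corestr_map {E E' : Type} le lab le' lab' (g : E -> E') (D : E -> Prop) :
  is_map A le lab le' lab' (fun e => Some (g e)) -> down_closed le D ->
  is_map A (sub_le le D) (sub_lab lab D) (sub_le le' (image g D)) (sub_lab lab' (image g D))
    (fun a => Some (image_corestr g D a)).
Proof.
  intros Hg HD. split; [|split].
  - intros [y [a [Ha <-]]]. now exists (exist D a Ha).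
  - intros T HT c c' [a [Ha Hac]] Hle. injection Hac as <-.
    set (T' := fun e => exists h, T (exist D e h)).
    assert (HT' : down_closed le T').
    { intros e e' [h He] Hee'. exists (HD _ _ h Hee'). exact (HT (exist D e h) (exist D e' _) He Hee'). }
    destruct (map_down Hg T' HT' (g (proj1_sig a)) (proj1_sig c')) as [e [[h He] Hec]].
    + exists (proj1_sig a). split; [|reflexivity]. exists (proj2_sig a). now destruct a.
    + exact Hle.
    + exists (exist D e h); split; auto. f_equal. apply proj1_sig_inj. now injection Hec.
  - intros a c H. injection H as <-. exact (map_lab Hg _ _ eq_refl).
Qed.

Lemma iso_inv {E E' : Type} le lab le' lab' (f : E -> E') :
  iso_map A le lab le' lab' f ->
  exists g, iso_map A le' lab' le lab g /\ (forall e, g (f e) = e) /\ (forall e', f (g e') = e').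
Proof.
  intros [Hf [g [H1 [H2 Hg]]]]. exists g; split; auto.
  split; auto. exists f; auto.
Qed.

Lemma iso_comp {E1 E2 E3 : Type} le1 lab1 le2 lab2 le3 lab3 (f : E1 -> E2) (g : E2 -> E3) :
  iso_map A le1 lab1 le2 lab2 f -> iso_map A le2 lab2 le3 lab3 g ->
  iso_map A le1 lab1 le3 lab3 (fun e => g (f e)).
Proof.
  intros [Hf [f' [F1 [F2 Hf']]]] [Hg [g' [G1 [G2 Hg']]]]. split.
  - exact (map_comp _ _ _ _ _ _ _ _ Hf Hg).
  - exists (fun e => f' (g' e)). split; [|split].
    + intros e. now rewrite G1, F1.
    + intros e. now rewrite F2, G2.
    + exact (map_comp _ _ _ _ _ _ _ _ Hg' Hf').
Qed.

Lemma real_iso_sym {E E' : Type} le lab le' lab' :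
  @real_iso A E E' le lab le' lab' -> real_iso A le' lab' le lab.
Proof. intros [f Hf]. destruct (iso_inv _ _ _ _ _ Hf) as [g [Hg _]]. now exists g. Qed.

Lemma real_iso_trans {E1 E2 E3 : Type} le1 lab1 le2 lab2 le3 lab3 :
  @real_iso A E1 E2 le1 lab1 le2 lab2 -> @real_iso A E2 E3 le2 lab2 le3 lab3 ->
  real_iso A le1 lab1 le3 lab3.
Proof. intros [f Hf] [g Hg]. exists (fun e => g (f e)). eapply iso_comp; eauto. Qed.

Lemma iso_injective {E E' : Type} le lab le' lab' (f : E -> E') :
  iso_map A le lab le' lab' f -> forall a b, f a = f b -> a = b.
Proof. intros [_ [g [H1 _]]] a b H. now rewrite <- (H1 a), H, H1. Qed.

Lemma iso_monotone {E E' : Type} le lab le' lab' (f : E -> E') :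
  is_real A le' lab' -> iso_map A le lab le' lab' f ->
  forall a b, le a b -> le' (f a) (f b).
Proof.
  intros Hr' [_ [g [H1 [H2 Hg]]]] a b Hab.
  destruct (map_down Hg _ (below_down_closed Hr' (f b)) b a) as [y [Hy Hya]]; auto.
  - exists (f b); split; [apply (real_refl Hr')|now rewrite H1].
  - injection Hya as <-. now rewrite H2.
Qed.

Lemma iso_top {E E' : Type} le lab le' lab' (f : E -> E') :
  is_real A le' lab' -> iso_map A le lab le' lab' f ->
  forall t, (forall e, le e t) -> forall e', le' e' (f t).
Proof.
  intros Hr' Hi t Ht e'. destruct Hi as [Hf [g [H1 [H2 Hg]]]].
  rewrite <- (H2 e'). apply (iso_monotone le lab le' lab' f Hr'); auto.
  split; auto. now exists g.
Qed.

Lemma iso_map_of_injective {E E' : Type} le lab le' lab' (f : E -> E') :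
  is_map A le lab le' lab' (fun e => Some (f e)) ->
  (forall a b, f a = f b -> a = b) ->
  (forall T, down_closed le' T -> down_closed le (fun e => T (f e))) ->
  iso_map A le lab le' lab' f.
Proof.
  intros Hf Hinj Hrefl.
  assert (Hs : forall y, exists e, f e = y).
  { intros y. destruct (map_surj Hf y) as [e He]. injection He; eauto. }
  set (g := fun y => proj1_sig (constructive_indefinite_description _ (Hs y))).
  assert (Hfg : forall y, f (g y) = y).
  { intros y. unfold g. now destruct (constructive_indefinite_description _ (Hs y)). }
  assert (Hgf : forall e, g (f e) = e) by (intros e; apply Hinj, Hfg).
  split; auto. exists g. split; [|split]; auto. split; [|split].
  - intros e. exists (f e). now rewrite Hgf.
  - intros T HT e e' [y [Hy Hye]] Hle. injection Hye as <-.
    exists (f e'); split; [|now rewrite Hgf].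
    apply (Hrefl T HT (g y) e'); auto. now rewrite Hfg.
  - intros y e H. injection H as <-. now rewrite (map_lab Hf (g y) _ eq_refl), Hfg.
Qed.


Definition option_case {T : Type} (o : option T) : {y | o = Some y} + {o = None} :=
  match o with Some y => inleft (exist _ y eq_refl) | None => inright eq_refl end.

Section Glue.
Variables (E E' : Type) (le : E -> E -> Prop) (lab : E -> ev A)
  (le' : E' -> E' -> Prop) (lab' : E' -> ev A) (f : E -> option E').
Hypotheses (Hr : is_real A le lab) (Hr' : is_real A le' lab')
  (Hf : is_map A le lab le' lab' f).

Definition glue : Type := (E' + {s : E | f s = None})%type.

Definition glue_in (s : E) : glue :=
  match option_case (f s) with
  | inleft (exist _ y _) => inl y
  | inright H => inr (exist _ s H)
  end.

Lemma glue_in_some s y : f s = Some y -> glue_in s = inl y.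
Proof. unfold glue_in; destruct (option_case (f s)) as [[y' H']|H']; congruence. Qed.

Lemma glue_in_none s (H : f s = None) : glue_in s = inr (exist _ s H).
Proof.
  unfold glue_in; destruct (option_case (f s)) as [[y' H']|H']; [congruence|].
  f_equal; now apply proj1_sig_inj.
Qed.

Lemma glue_in_inl s y : glue_in s = inl y -> f s = Some y.
Proof. unfold glue_in; destruct (option_case (f s)) as [[y' H']|H']; congruence. Qed.

Lemma glue_in_inr s u : glue_in s = inr u -> proj1_sig u = s.
Proof.
  unfold glue_in; destruct (option_case (f s)) as [[y' H']|H']; intros H;
    [discriminate|now injection H as <-].
Qed.

Lemma glue_in_rest u : glue_in (proj1_sig u) = inr u.
Proof. destruct u as [s H]; apply glue_in_none. Qed.

Definition glue_le (z1 z2 : glue) : Prop :=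
  match z2 with
  | inl y2 => match z1 with inl y1 => le' y1 y2 | inr _ => False end
  | inr u => exists s, le s (proj1_sig u) /\ glue_in s = z1
  end.

Definition glue_lab (z : glue) : ev A :=
  match z with inl y => lab' y | inr u => lab (proj1_sig u) end.

Lemma glue_lab_in s : glue_lab (glue_in s) = lab s.
Proof.
  destruct (f s) as [y|] eqn:H.
  - rewrite (glue_in_some _ _ H). symmetry; exact (map_lab Hf _ _ H).
  - now rewrite (glue_in_none _ H).
Qed.

Lemma glue_le_refl z : glue_le z z.
Proof.
  destruct z as [y|u]; simpl.
  - apply (real_refl Hr').
  - exists (proj1_sig u); split; [apply (real_refl Hr)|apply glue_in_rest].
Qed.

Lemma glue_le_antisym z1 z2 : glue_le z1 z2 -> glue_le z2 z1 -> z1 = z2.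
Proof.
  destruct z1 as [y1|u1], z2 as [y2|u2]; simpl; try tauto.
  - intros; f_equal; now apply (real_antisym Hr').
  - intros [s1 [H1 H1']] [s2 [H2 H2']].
    apply glue_in_inr in H1', H2'. subst.
    f_equal; apply proj1_sig_inj, (real_antisym Hr); auto.
Qed.

Lemma glue_le_trans z1 z2 z3 : glue_le z1 z2 -> glue_le z2 z3 -> glue_le z1 z3.
Proof.
  destruct z3 as [y3|u3].
  - destruct z2 as [y2|u2]; [|simpl; tauto]. destruct z1 as [y1|u1]; [|simpl; tauto].
    apply (real_trans Hr').
  - simpl. intros H12 [s2 [Hs2 Hh2]].
    destruct z2 as [y2|u2].
    + destruct z1 as [y1|u1]; [|simpl in H12; tauto]. simpl in H12.
      apply glue_in_inl in Hh2.
      destruct (map_down Hf _ (below_down_closed Hr s2) y2 y1) as [s1 [Hs1 Hf1]]; auto.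
      { exists s2; split; auto. apply (real_refl Hr). }
      exists s1; split; [eapply (real_trans Hr); eauto|]. now apply glue_in_some.
    + destruct H12 as [s1 [Hs1 Hh1]]. apply glue_in_inr in Hh2. subst s2.
      exists s1; split; auto. eapply (real_trans Hr); eauto.
Qed.

Lemma glue_below_finite z : finite (below glue_le z).
Proof.
  destruct z as [y|u].
  - destruct (real_below_finite Hr' y) as [l Hl]. exists (map inl l).
    intros [y'|u'] H; [apply in_map; now apply Hl|contradiction].
  - destruct (real_below_finite Hr (proj1_sig u)) as [l Hl]. exists (map glue_in l).
    intros z [s [Hs <-]]. apply in_map; now apply Hl.
Qed.

Lemma glue_config x : down_closed glue_le x -> config A (image glue_lab x).
Proof.
  intros Hx. split.
  - apply config_sub_consistent with (image lab (fun _ => True)); [|apply (real_config_all Hr)].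
    intros a [[y|u] [_ <-]]; simpl.
    + destruct (map_surj Hf y) as [s Hs]. exists s; split; auto. exact (map_lab Hf _ _ Hs).
    + now exists (proj1_sig u).
  - intros a [[y|u] [Hz <-]]; simpl.
    + destruct (real_config Hr' (fun y' => x (inl y'))) as [_ Hs].
      { intros y1 y2 H1 H2. exact (Hx (inl y1) (inl y2) H1 H2). }
      destruct (Hs (lab' y)) as [l [Hl1 Hl2]]; [now exists y|].
      exists l; split; auto. intros b Hb. destruct (Hl2 b Hb) as [y' [Hy' <-]].
      now exists (inl y').
    + destruct (real_config Hr _ (below_down_closed Hr (proj1_sig u))) as [_ Hs].
      destruct (Hs (lab (proj1_sig u))) as [l [Hl1 Hl2]].
      { exists (proj1_sig u); split; auto. apply (real_refl Hr). }
      exists l; split; auto. intros b Hb. destruct (Hl2 b Hb) as [s [Hs1 <-]].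
      exists (glue_in s); split; [|apply glue_lab_in].
      apply (Hx _ _ Hz). now exists s.
Qed.

Lemma glue_real : is_real A glue_le glue_lab.
Proof.
  repeat split.
  - exact glue_le_refl.
  - exact glue_le_antisym.
  - exact glue_le_trans.
  - exact glue_below_finite.
  - intros y Hy; now apply glue_config.
  - intros y Hy; now apply glue_config.
Qed.

Lemma glue_map : is_map A le lab glue_le glue_lab (fun s => Some (glue_in s)).
Proof.
  split; [|split].
  - intros [y|u].
    + destruct (map_surj Hf y) as [s Hs]. exists s. f_equal; now apply glue_in_some.
    + exists (proj1_sig u). f_equal; apply glue_in_rest.
  - intros x Hx z z' [s [Hs Hz]] Hle. injection Hz as Hz.
    destruct z as [y|u].
    + apply glue_in_inl in Hz. destruct z' as [y'|u']; [|simpl in Hle; tauto].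
      destruct (map_down Hf _ Hx y y') as [s' [Hs' Hf']]; eauto.
      exists s'; split; auto. f_equal; now apply glue_in_some.
    + apply glue_in_inr in Hz. subst s. destruct Hle as [s' [Hs' Hz']].
      exists s'; split; [eapply Hx; eauto|]. now rewrite Hz'.
  - intros s z H. injection H as <-. symmetry; apply glue_lab_in.
Qed.

Lemma glue_inl_down_closed (T : E' -> Prop) :
  down_closed le' T ->
  down_closed glue_le (fun z => match z with inl y => T y | inr _ => False end).
Proof. intros HT [y|u] [y'|u']; simpl; try tauto. apply HT. Qed.

Lemma extremal_glue_inverse : extremal A le lab ->
  exists k : glue -> E, (forall s, k (glue_in s) = s) /\ (forall z, glue_in (k z) = z) /\
    is_map A glue_le glue_lab le lab (fun z => Some (k z)).
Proof.
  intros Hx. destruct (Hx _ _ _ glue_real glue_in glue_map) as [_ [k Hk]].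
  now exists k.
Qed.

End Glue.

Arguments glue_in_some {E E' f s y} _.
Arguments glue_in_inl {E E' f s y} _.
Arguments glue_inl_down_closed {E E' le le' f T} _.
Arguments extremal_glue_inverse {E E' le lab le' lab' f} Hr Hr' Hf Hx.

Section ExtremalMaps.
Variables (E E' : Type) (le : E -> E -> Prop) (lab : E -> ev A)
  (le' : E' -> E' -> Prop) (lab' : E' -> ev A).
Hypotheses (Hr : is_real A le lab) (Hr' : is_real A le' lab') (Hx : extremal A le lab).

Lemma extremal_map_injective (f : E -> option E') :
  is_map A le lab le' lab' f -> forall s1 s2 y, f s1 = Some y -> f s2 = Some y -> s1 = s2.
Proof.
  intros Hf s1 s2 y H1 H2.
  destruct (extremal_glue_inverse Hr Hr' Hf Hx) as [k [Hk _]].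
  rewrite <- (Hk s1), <- (Hk s2).
  now rewrite (glue_in_some H1), (glue_in_some H2).
Qed.

Lemma extremal_map_preimage_down (f : E -> option E') (T : E' -> Prop) :
  is_map A le lab le' lab' f -> down_closed le' T ->
  down_closed le (fun s => exists y, T y /\ f s = Some y).
Proof.
  intros Hf HT.
  destruct (extremal_glue_inverse Hr Hr' Hf Hx) as [k [Hk [Hk' Hkmap]]].
  intros s s' [y [Hy Hs]] Hle.
  destruct (map_down Hkmap _ (glue_inl_down_closed HT) s s')
    as [[y'|u] [Hz Hzs]]; [| exact Hle | |contradiction].
  - exists (inl y); split; [exact Hy|]. now rewrite <- (glue_in_some Hs), Hk.
  - exists y'; split; [exact Hz|]. injection Hzs as <-.
    apply glue_in_inl, Hk'.
Qed.

Lemma extremal_map_total (t : E) (Ht : forall e, le e t) (f : E -> option E') :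
  is_map A le lab le' lab' f -> (exists y, f t = Some y) ->
  exists f', (forall s, f s = Some (f' s)) /\ iso_map A le lab le' lab' f'.
Proof.
  intros Hf [y0 H0].
  assert (Htot : forall s, exists y, f s = Some y).
  { intros s.
    destruct (extremal_map_preimage_down f (fun _ => True) Hf (fun _ _ _ _ => I) t s)
      as [y [_ Hy]]; [now exists y0|apply Ht|now exists y]. }
  set (f' := fun s => match f s with Some y => y | None => y0 end).
  assert (Hf' : forall s, f s = Some (f' s)).
  { intros s; unfold f'. destruct (Htot s) as [y Hy]; now rewrite Hy. }
  exists f'; split; [exact Hf'|]. apply Hx; [exact Hr'|].
  replace (fun e => Some (f' e)) with f; [exact Hf|]. extensionality s; apply Hf'.
Qed.

End ExtremalMaps.

Arguments extremal_map_injective {E E' le lab le' lab'} Hr Hr' Hx f _ s1 s2 y _ _.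
Arguments extremal_map_preimage_down {E E' le lab le' lab'} Hr Hr' Hx f T _ _.
Arguments extremal_map_total {E E' le lab le' lab'} Hr Hr' Hx t Ht f _ _.

Lemma below_extremal {E : Type} (le : E -> E -> Prop) (lab : E -> ev A)
  (Hr : is_real A le lab) (Hx : extremal A le lab) e :
  extremal A (sub_le le (below le e)) (sub_lab lab (below le e)).
Proof.
  intros E' le' lab' Hr' g Hg.
  set (C := below le e).
  set (f := pcomp (restr C) (fun b => Some (g b))).
  assert (Hf : is_map A le lab le' lab' f).
  { exact (map_comp _ _ _ _ _ _ _ _ (restr_map le lab C (below_down_closed Hr e)) Hg). }
  assert (Hfb : forall b, f (proj1_sig b) = Some (g b)).
  { intros b. unfold f, pcomp. now rewrite restr_in. }
  apply iso_map_of_injective; [exact Hg| |].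
  - intros b1 b2 H. apply proj1_sig_inj.
    apply (extremal_map_injective Hr Hr' Hx f Hf _ _ (g b2)); rewrite Hfb; congruence.
  - intros T HT b b' Hb Hle.
    destruct (extremal_map_preimage_down Hr Hr' Hx f T Hf HT (proj1_sig b) (proj1_sig b'))
      as [y [Hy Hy']].
    + exists (g b). now rewrite Hfb.
    + exact Hle.
    + rewrite Hfb in Hy'. now injection Hy' as <-.
Qed.

Section Representatives.
Variables (I : Type) (R : I -> realisation A) (top : forall i, carrier (R i)).
Hypotheses
  (Htop : forall i e, rle (R i) e (top i))
  (Hext : forall i, extremal A (rle (R i)) (rlab (R i)))
  (Hdistinct : forall i j,
      real_iso A (rle (R i)) (rlab (R i)) (rle (R j)) (rlab (R j)) -> i = j)
  (Hcover : forall (E : Type) (le : E -> E -> Prop) (lab : E -> ev A),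
      is_real A le lab -> extremal A le lab -> has_top le ->
      exists i, real_iso A le lab (rle (R i)) (rlab (R i))).

Lemma leP_refl p : leP R p p.
Proof. apply real_preceq_refl. Qed.

Lemma leP_trans p q r : leP R p q -> leP R q r -> leP R p r.
Proof. apply real_preceq_trans. Qed.

Lemma Psi_down_closed {E : Type} (le : E -> E -> Prop) (lab : E -> ev A) :
  down_closed (leP R) (Psi R le lab).
Proof. intros p q Hp Hqp. exact (real_preceq_trans _ _ _ _ _ _ Hqp Hp). Qed.

Section DownRep.
Variables (E : Type) (le : E -> E -> Prop) (lab : E -> ev A).
Hypotheses (Hr : is_real A le lab) (Hx : extremal A le lab).

Lemma down_rep_exists e : exists q,
  real_iso A (sub_le le (below le e)) (sub_lab lab (below le e)) (rle (R q)) (rlab (R q)).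
Proof.
  apply Hcover.
  - apply below_real, Hr.
  - now apply below_extremal.
  - exists (below_top Hr e). apply below_top_top.
Qed.

Definition down_rep e : I :=
  proj1_sig (constructive_indefinite_description _ (down_rep_exists e)).

Lemma down_rep_iso e :
  real_iso A (sub_le le (below le e)) (sub_lab lab (below le e))
    (rle (R (down_rep e))) (rlab (R (down_rep e))).
Proof.
  unfold down_rep. now destruct (constructive_indefinite_description _ (down_rep_exists e)).
Qed.

Lemma down_rep_iso_top e f :
  iso_map A (sub_le le (below le e)) (sub_lab lab (below le e))
    (rle (R (down_rep e))) (rlab (R (down_rep e))) f ->
  f (below_top Hr e) = top (down_rep e).
Proof.
  intros Hf. apply (real_top_unique (rreal (R (down_rep e)))); [|apply Htop].
  apply (iso_top _ _ _ _ _ (rreal (R (down_rep e))) Hf). apply below_top_top.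
Qed.

Lemma maxA_down_rep e : maxA R top (down_rep e) = lab e.
Proof.
  destruct (down_rep_iso e) as [f Hf]. unfold maxA. rewrite <- (down_rep_iso_top e f Hf).
  symmetry. exact (map_lab (proj1 Hf) (below_top Hr e) _ eq_refl).
Qed.

Lemma down_rep_map e : exists g,
  is_map A le lab (rle (R (down_rep e))) (rlab (R (down_rep e))) g /\
  g e = Some (top (down_rep e)) /\ (forall s y, g s = Some y -> le s e).
Proof.
  destruct (down_rep_iso e) as [f Hf].
  exists (pcomp (restr (below le e)) (fun b => Some (f b))). split; [|split].
  - eapply map_comp; [apply restr_map, (below_down_closed Hr)|apply Hf].
  - unfold pcomp. assert (Htop_in := restr_in _ (below_top Hr e)); simpl in Htop_in.
    rewrite Htop_in. f_equal. now apply down_rep_iso_top.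
  - unfold pcomp. intros s y.
    destruct (restr (below le e) s) as [b|] eqn:Hb; [|discriminate].
    apply restr_some in Hb. subst s. intros _. exact (proj2_sig b).
Qed.

Lemma Psi_down_rep e : Psi R le lab (down_rep e).
Proof. destruct (down_rep_map e) as [g [Hg _]]. now exists g. Qed.

Lemma down_rep_unique q g e :
  is_map A le lab (rle (R q)) (rlab (R q)) g -> g e = Some (top q) -> q = down_rep e.
Proof.
  intros Hg He.
  assert (Hg' : is_map A (sub_le le (below le e)) (sub_lab lab (below le e))
                  (rle (R q)) (rlab (R q)) (fun b => g (proj1_sig b))).
  { apply map_restrict_dom; [exact Hg|apply (below_down_closed Hr)|].
    intros y.
    destruct (map_down Hg (below le e) (below_down_closed Hr e) (top q) y) as [s Hs].
    - exists e; split; [apply (real_refl Hr)|exact He].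
    - apply Htop.
    - now exists s. }
  destruct (extremal_map_total (below_real Hr e) (rreal (R q)) (below_extremal le lab Hr Hx e)
              (below_top Hr e) (below_top_top Hr e) _ Hg') as [f' [_ Hf']].
  { now exists (top q). }
  apply Hdistinct.
  exact (real_iso_trans _ _ _ _ _ _ (real_iso_sym _ _ _ _ (ex_intro _ f' Hf')) (down_rep_iso e)).
Qed.

Lemma Psi_down_repP q : Psi R le lab q <-> exists e, q = down_rep e.
Proof.
  split.
  - intros [g Hg]. destruct (map_surj Hg (top q)) as [e He].
    exists e. eapply down_rep_unique; eauto.
  - intros [e ->]. apply Psi_down_rep.
Qed.

Lemma leP_down_rep e c : leP R c (down_rep e) -> exists e', le e' e /\ c = down_rep e'.
Proof.
  intros [h Hh]. destruct (down_rep_map e) as [g [Hg [_ Hdom]]].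
  assert (Hc := map_comp _ _ _ _ _ _ _ _ Hg Hh).
  destruct (map_surj Hc (top c)) as [e' He'].
  exists e'; split.
  - unfold pcomp in He'. destruct (g e') as [y|] eqn:Hy; [|discriminate].
    eapply Hdom; eauto.
  - eapply down_rep_unique; eauto.
Qed.

End DownRep.

Arguments down_rep {E le lab} Hr Hx e.
Arguments down_rep_iso {E le lab} Hr Hx e.
Arguments maxA_down_rep {E le lab} Hr Hx e.
Arguments Psi_down_rep {E le lab} Hr Hx e.
Arguments down_rep_unique {E le lab} Hr Hx q g e _ _.
Arguments Psi_down_repP {E le lab} Hr Hx q.
Arguments leP_down_rep {E le lab} Hr Hx e c _.

Definition subrep (q : I) (r : carrier (R q)) : I := down_rep (rreal (R q)) (Hext q) r.

Lemma subrep_leP q r : leP R (subrep q r) q.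
Proof. apply Psi_down_rep. Qed.

Lemma maxA_subrep q r : maxA R top (subrep q r) = rlab (R q) r.
Proof. apply maxA_down_rep. Qed.

Lemma subrep_top q : subrep q (top q) = q.
Proof. symmetry. exact (down_rep_unique (rreal (R q)) (Hext q) q _ (top q) (map_id _ _) eq_refl). Qed.

Lemma leP_subrep q c : leP R c q -> exists r, c = subrep q r.
Proof. exact (proj1 (Psi_down_repP (rreal (R q)) (Hext q) c)). Qed.

Lemma leP_antisym p q : leP R p q -> leP R q p -> p = q.
Proof.
  intros [g Hg] [g' Hg'].
  destruct (map_surj Hg (top p)) as [e He].
  destruct (map_surj Hg' (top q)) as [e' He'].
  assert (Hp := down_rep_unique (rreal (R q)) (Hext q) p g e Hg He).
  assert (Hq := down_rep_unique (rreal (R p)) (Hext p) q g' e' Hg' He').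
  (* [R q] embeds into [R p], which embeds below [e] in [R q] *)
  assert (He_top : e = top q).
  { assert (F1 := down_rep_iso (rreal (R q)) (Hext q) e). rewrite <- Hp in F1.
    assert (F2 := down_rep_iso (rreal (R p)) (Hext p) e'). rewrite <- Hq in F2.
    destruct F1 as [f1 F1], F2 as [f2 F2].
    destruct (iso_inv _ _ _ _ _ F1) as [k1 [K1 _]].
    destruct (iso_inv _ _ _ _ _ F2) as [k2 [K2 _]].
    apply (injective_endo_below_top _ _ _ (rreal (R q)) (top q) (Htop q)
             (fun r => proj1_sig (k1 (proj1_sig (k2 r))))).
    - intros a b H. apply proj1_sig_inj, (iso_injective _ _ _ _ _ K1) in H.
      now apply proj1_sig_inj, (iso_injective _ _ _ _ _ K2) in H.
    - intros r. exact (proj2_sig (k1 (proj1_sig (k2 r)))). }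
  subst e. rewrite Hp. apply subrep_top.
Qed.

Lemma Psi_config {E : Type} {le : E -> E -> Prop} {lab : E -> ev A}
  (Hr : is_real A le lab) (Hx : extremal A le lab) : configP R top (Psi R le lab).
Proof.
  split; [apply Psi_down_closed|].
  intros X HX HXs. split; [exact HX|].
  assert (HY : subset (downP R X) (Psi R le lab)).
  { intros q [p [Hp Hqp]]. exact (Psi_down_closed le lab p q (HXs p Hp) Hqp). }
  split.
  - apply config_sub_consistent with (image lab (fun _ => True)); [|apply (real_config_all Hr)].
    intros a [q [Hq <-]]. destruct (proj1 (Psi_down_repP Hr Hx q) (HY q Hq)) as [e ->].
    exists e; split; [trivial|symmetry; apply maxA_down_rep].
  - intros a [q [Hq <-]].
    destruct (real_config_all (rreal (R q))) as [_ Hsec].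
    destruct (Hsec (maxA R top q)) as [l [Hl1 Hl2]]; [now exists (top q)|].
    exists l; split; [exact Hl1|]. intros b Hb. destruct (Hl2 b Hb) as [r [_ <-]].
    exists (subrep q r). split; [|apply maxA_subrep].
    destruct Hq as [p [Hp Hqp]]. exists p; split; [exact Hp|].
    exact (leP_trans _ _ _ (subrep_leP q r) Hqp).
Qed.

Section Phi.
Variable x : I -> Prop.
Hypothesis Hx : configP R top x.

Lemma configP_config Y :
  down_closed (leP R) Y -> subset Y x -> config A (image (maxA R top) Y).
Proof.
  intros HY HYx. destruct Hx as [_ HxC]. split.
  - intros F HF HFY.
    destruct (finite_image_lift (maxA R top) Y F HF HFY) as [X [HXfin [HXY HFX]]].
    destruct (HxC X HXfin (fun p Hp => HYx p (HXY p Hp))) as [_ [Hcons _]].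
    apply Hcons; [exact HF|].
    intros a Fa. destruct (HFX a Fa) as [p [Hp <-]].
    exists p; split; [|reflexivity]. exists p; split; [exact Hp|apply leP_refl].
  - intros a [p [Hp <-]].
    destruct (HxC (fun q => q = p)) as [_ [_ Hsec]].
    + exists [p]; intros q ->; now left.
    + intros q ->. now apply HYx.
    + destruct (Hsec (maxA R top p)) as [l [Hl1 Hl2]].
      { exists p; split; [|reflexivity]. exists p; split; [reflexivity|apply leP_refl]. }
      exists l; split; [exact Hl1|]. intros b Hb.
      destruct (Hl2 b Hb) as [q [[q' [-> Hqp]] <-]].
      exists q; split; [exact (HY _ _ Hp Hqp)|reflexivity].
Qed.

Definition Phi_subrep (b : sig x) (r : carrier (R (proj1_sig b))) : sig x :=
  exist x (subrep (proj1_sig b) r) (proj1 Hx _ _ (proj2_sig b) (subrep_leP _ r)).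

Lemma Phi_subrep_top b : Phi_subrep b (top (proj1_sig b)) = b.
Proof. apply proj1_sig_inj, subrep_top. Qed.

Lemma Phi_real : is_real A (PhiLe R x) (PhiLab R top x).
Proof.
  split; [|split; [|split; [|split]]].
  - intros a; apply leP_refl.
  - intros a b H1 H2. now apply proj1_sig_inj, leP_antisym.
  - intros a b c; apply leP_trans.
  - intros b.
    destruct (real_below_finite (rreal (R (proj1_sig b))) (top (proj1_sig b))) as [l Hl].
    exists (map (Phi_subrep b) l).
    intros c Hc. destruct (leP_subrep _ _ Hc) as [r Hcr]. apply in_map_iff.
    exists r; split; [now apply proj1_sig_inj|apply Hl, Htop].
  - intros y Hy.
    apply config_equiv with (image (maxA R top) (fun p => exists h, y (exist x p h))).
    + intros a; split.
      * intros [p [[h Hp] <-]]. now exists (exist x p h).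
      * intros [[p h] [Hp <-]]. exists p; split; [now exists h|reflexivity].
    + apply configP_config.
      * intros p q [h Hp] Hqp. exists (proj1 Hx p q h Hqp).
        exact (Hy (exist x p h) (exist x q _) Hp Hqp).
      * intros p [h _]; exact h.
Qed.

Definition Phi_subrep_below (b : sig x) (r : carrier (R (proj1_sig b))) :
  sig (below (PhiLe R x) b) :=
  exist _ (Phi_subrep b r) (subrep_leP _ r).

Lemma Phi_subrep_below_map b :
  is_map A (rle (R (proj1_sig b))) (rlab (R (proj1_sig b)))
    (sub_le (PhiLe R x) (below (PhiLe R x) b)) (sub_lab (PhiLab R top x) (below (PhiLe R x) b))
    (fun r => Some (Phi_subrep_below b r)).
Proof.
  split; [|split].
  - intros [c Hc]. destruct (leP_subrep _ _ Hc) as [r Hcr]. exists r.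
    f_equal. apply proj1_sig_inj, proj1_sig_inj. symmetry; exact Hcr.
  - intros D HD c c' [r [Hr Hrc]] Hle. injection Hrc as <-.
    destruct (leP_down_rep (rreal (R (proj1_sig b))) (Hext _) r _ Hle) as [r' [Hr' Hc']].
    exists r'; split; [exact (HD _ _ Hr Hr')|].
    f_equal. apply proj1_sig_inj, proj1_sig_inj. symmetry; exact Hc'.
  - intros r c H. injection H as <-. symmetry. apply maxA_subrep.
Qed.

Lemma Phi_subrep_below_iso b :
  iso_map A (rle (R (proj1_sig b))) (rlab (R (proj1_sig b)))
    (sub_le (PhiLe R x) (below (PhiLe R x) b)) (sub_lab (PhiLab R top x) (below (PhiLe R x) b))
    (Phi_subrep_below b).
Proof. exact (Hext _ _ _ _ (below_real Phi_real b) _ (Phi_subrep_below_map b)). Qed.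

Section PhiMap.
Variables (E' : Type) (le' : E' -> E' -> Prop) (lab' : E' -> ev A) (g : sig x -> E').
Hypotheses (Hr' : is_real A le' lab')
  (Hg : is_map A (PhiLe R x) (PhiLab R top x) le' lab' (fun c => Some (g c))).

Lemma Phi_map_image_iso b :
  iso_map A (rle (R (proj1_sig b))) (rlab (R (proj1_sig b)))
    (sub_le le' (image g (below (PhiLe R x) b))) (sub_lab lab' (image g (below (PhiLe R x) b)))
    (fun r => image_corestr g _ (Phi_subrep_below b r)).
Proof.
  apply Hext.
  - exact (sub_real Hr' _ (image_down_closed _ _ _ _ g _ Hg (below_down_closed Phi_real b))).
  - exact (map_comp _ _ _ _ _ _ _ _ (Phi_subrep_below_map b)
             (image_corestr_map _ _ _ _ g _ Hg (below_down_closed Phi_real b))).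
Qed.

Lemma Phi_map_monotone c b : PhiLe R x c b -> le' (g c) (g b).
Proof.
  intros Hcb.
  assert (H := iso_top _ _ _ _ _
    (sub_real Hr' _ (image_down_closed _ _ _ _ g _ Hg (below_down_closed Phi_real b)))
    (Phi_map_image_iso b) (top _) (Htop _) (exist _ (g c) (ex_intro _ c (conj Hcb eq_refl)))).
  unfold sub_le in H; simpl in H. now rewrite Phi_subrep_top in H.
Qed.

Lemma Phi_map_below_iso b :
  real_iso A (rle (R (proj1_sig b))) (rlab (R (proj1_sig b)))
    (sub_le le' (below le' (g b))) (sub_lab lab' (below le' (g b))).
Proof.
  assert (Himage : image g (below (PhiLe R x) b) = below le' (g b)).
  { extensionality y. apply propositional_extensionality. split.
    - intros [c [Hc <-]]. exact (Phi_map_monotone c b Hc).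
    - intros Hy.
      exact (image_down_closed _ _ _ _ g _ Hg (below_down_closed Phi_real b) (g b) y
               (ex_intro _ b (conj (leP_refl _) eq_refl)) Hy). }
  rewrite <- Himage. exact (ex_intro _ _ (Phi_map_image_iso b)).
Qed.

End PhiMap.

Lemma Phi_extremal : extremal A (PhiLe R x) (PhiLab R top x).
Proof.
  intros E' le' lab' Hr' g Hg.
  apply iso_map_of_injective; [exact Hg| |].
  - intros b1 b2 H. apply proj1_sig_inj, Hdistinct.
    assert (Hiso2 := Phi_map_below_iso E' le' lab' g Hr' Hg b2). rewrite <- H in Hiso2.
    exact (real_iso_trans _ _ _ _ _ _ (Phi_map_below_iso E' le' lab' g Hr' Hg b1)
             (real_iso_sym _ _ _ _ Hiso2)).
  - intros T HT b b' Hb Hle. exact (HT _ _ Hb (Phi_map_monotone E' le' lab' g Hr' Hg b' b Hle)).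
Qed.

Lemma down_rep_Phi b : down_rep Phi_real Phi_extremal b = proj1_sig b.
Proof.
  apply Hdistinct.
  exact (real_iso_trans _ _ _ _ _ _ (real_iso_sym _ _ _ _ (down_rep_iso _ _ b))
           (real_iso_sym _ _ _ _ (ex_intro _ _ (Phi_subrep_below_iso b)))).
Qed.

Lemma Psi_Phi p : Psi R (PhiLe R x) (PhiLab R top x) p <-> x p.
Proof.
  split.
  - intros Hp. destruct (proj1 (Psi_down_repP Phi_real Phi_extremal p) Hp) as [b ->].
    rewrite down_rep_Phi. exact (proj2_sig b).
  - intros Hp. assert (Hrep := down_rep_Phi (exist x p Hp)); simpl in Hrep.
    rewrite <- Hrep. apply Psi_down_rep.
Qed.

End Phi.

Section Embedding.
Variables (E : Type) (le : E -> E -> Prop) (lab : E -> ev A).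
Hypotheses (Hr : is_real A le lab) (Hx : extremal A le lab).

Definition to_Phi (e : E) : sig (Psi R le lab) :=
  exist _ (down_rep Hr Hx e) (Psi_down_rep Hr Hx e).

Lemma to_Phi_map :
  is_map A le lab (PhiLe R (Psi R le lab)) (PhiLab R top (Psi R le lab))
    (fun e => Some (to_Phi e)).
Proof.
  split; [|split].
  - intros [q Hq]. destruct (proj1 (Psi_down_repP Hr Hx q) Hq) as [e ->].
    exists e. f_equal. now apply proj1_sig_inj.
  - intros D HD c c' [e [He Hec]] Hle. injection Hec as <-.
    destruct (leP_down_rep Hr Hx e _ Hle) as [e' [He' Hc']].
    exists e'; split; [exact (HD _ _ He He')|]. f_equal; now apply proj1_sig_inj.
  - intros e c H. injection H as <-. symmetry; apply maxA_down_rep.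
Qed.

Lemma to_Phi_iso :
  iso_map A le lab (PhiLe R (Psi R le lab)) (PhiLab R top (Psi R le lab)) to_Phi.
Proof. exact (Hx _ _ _ (Phi_real _ (Psi_config Hr Hx)) to_Phi to_Phi_map). Qed.

End Embedding.

Lemma Psi_monotone {E E' : Type} (le : E -> E -> Prop) (lab : E -> ev A)
  (le' : E' -> E' -> Prop) (lab' : E' -> ev A) :
  real_preceq A le lab le' lab' -> subset (Psi R le lab) (Psi R le' lab').
Proof. intros H p Hp. exact (real_preceq_trans _ _ _ _ _ _ Hp H). Qed.

Lemma Psi_subset_preceq {E E' : Type} {le : E -> E -> Prop} {lab : E -> ev A}
  {le' : E' -> E' -> Prop} {lab' : E' -> ev A}
  (Hr : is_real A le lab) (Hx : extremal A le lab)
  (Hr' : is_real A le' lab') (Hx' : extremal A le' lab') :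
  subset (Psi R le lab) (Psi R le' lab') -> real_preceq A le lab le' lab'.
Proof.
  intros Hsub.
  destruct (iso_inv _ _ _ _ _ (to_Phi_iso E le lab Hr Hx)) as [k [[Hk _] _]].
  eexists. eapply map_comp; [eapply map_comp|exact Hk].
  - exact (to_Phi_map E' le' lab' Hr' Hx').
  - exact (sub_restr_map (leP R) (maxA R top) _ _ (Psi_down_closed le lab) Hsub).
Qed.

End Representatives.
End Realisations.

Theorem mainTheorem1 (A : GES) (I : Type) (R : I -> realisation A)
  (top : forall i, carrier (R i))
  (* R is a system of representatives of the isomorphism classes of extremal
     realisations of C^infty(A) having a top element *)
  (Htop : forall i e, rle (R i) e (top i))
  (Hext : forall i, extremal A (rle (R i)) (rlab (R i)))
  (Hdistinct : forall i j, real_iso A (rle (R i)) (rlab (R i)) (rle (R j)) (rlab (R j)) -> i = j)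
  (Hcover : forall (E : Type) (le : E -> E -> Prop) (lab : E -> ev A),
      is_real A le lab -> extremal A le lab -> has_top le ->
      exists i, real_iso A le lab (rle (R i)) (rlab (R i))) :
  (* extremal realisation rho |-> configuration {p | p <= rho} *)
  (forall (E : Type) (le : E -> E -> Prop) (lab : E -> ev A),
      is_real A le lab -> extremal A le lab ->
      configP R top (Psi R le lab)) /\
  (* configuration x |-> extremal realisation (x, <=_P|x, max_A), and back *)
  (forall x : I -> Prop, configP R top x ->
      is_real A (PhiLe R x) (PhiLab R top x) /\
      extremal A (PhiLe R x) (PhiLab R top x) /\
      (forall p, Psi R (PhiLe R x) (PhiLab R top x) p <-> x p)) /\
  (forall (E : Type) (le : E -> E -> Prop) (lab : E -> ev A),
      is_real A le lab -> extremal A le lab ->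
      real_iso A (PhiLe R (Psi R le lab)) (PhiLab R top (Psi R le lab)) le lab) /\
  (* order isomorphism *)
  (forall (E : Type) (le : E -> E -> Prop) (lab : E -> ev A)
          (E' : Type) (le' : E' -> E' -> Prop) (lab' : E' -> ev A),
      is_real A le lab -> extremal A le lab ->
      is_real A le' lab' -> extremal A le' lab' ->
      (real_preceq A le lab le' lab' <-> subset (Psi R le lab) (Psi R le' lab'))).
Proof.
  split; [|split; [|split]].
  - intros E le lab Hr Hx. exact (Psi_config A I R top Htop Hext Hdistinct Hcover Hr Hx).
  - intros x Hx. split; [|split].
    + exact (Phi_real A I R top Htop Hext Hdistinct Hcover x Hx).
    + exact (Phi_extremal A I R top Htop Hext Hdistinct Hcover x Hx).
    + exact (Psi_Phi A I R top Htop Hext Hdistinct Hcover x Hx).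
  - intros E le lab Hr Hx. apply real_iso_sym. eexists.
    exact (to_Phi_iso A I R top Htop Hext Hdistinct Hcover E le lab Hr Hx).
  - intros E le lab E' le' lab' Hr Hx Hr' Hx'. split.
    + apply Psi_monotone.
    + exact (Psi_subset_preceq A I R top Htop Hext Hdistinct Hcover Hr Hx Hr' Hx').
Qed.
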